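(* Let $K$ be a compact metrizable space of topological dimension at most $1$, and let $J$ be a compact subset of $K$. Let $B$ be a uniform algebra on $J$ with dense invertibles, and let $A=\{f\in C(K): f|_J\in B\}$. Then $A$ has dense invertibles.
   Context: A uniform algebra on a compact Hausdorff space $J$ is a closed subalgebra of $C(J)$ (supremum norm) containing the constants and separating points. A uniform algebra has dense invertibles if its invertible elements are dense in it. Topological dimension means Lebesgue covering dimension. *)

From Stdlib Require Import Reals Lra.
Open Scope R_scope.

Definition Cx : Type := (R * R)%type.
Definition Cadd (z w : Cx) : Cx := (fst z + fst w, snd z + snd w).
Definition Cmul (z w : Cx) : Cx :=
  (fst z * fst w - snd z * snd w, fst z * snd w + snd z * fst w).
Definition Copp (z : Cx) : Cx := (- fst z, - snd z).
Definition Cone : Cx := (1, 0).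
Definition Cmod (z : Cx) : R := sqrt (fst z * fst z + snd z * snd z).

Record MetricSpace := MkMetricSpace {
  pt :> Type;
  dist : pt -> pt -> R;
  dist_self : forall x, dist x x = 0;
  dist_eq : forall x y, dist x y = 0 -> x = y;
  dist_sym : forall x y, dist x y = dist y x;
  dist_tri : forall x y z, dist x z <= dist x y + dist y z
}.
Arguments dist {m} _ _.

Definition is_open {X : MetricSpace} (U : X -> Prop) : Prop :=
  forall x, U x -> exists r, 0 < r /\ forall y, dist x y < r -> U y.

Definition compact_set {X : MetricSpace} (J : X -> Prop) : Prop :=
  forall (I : Type) (U : I -> X -> Prop),
    (forall i, is_open (U i)) ->
    (forall x, J x -> exists i, U i x) ->
    exists l : list I, forall x, J x -> exists i, List.In i l /\ U i x.

Definition compact_space (X : MetricSpace) : Prop :=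
  compact_set (fun _ : X => True).

(* Lebesgue covering dimension <= 1: every finite open cover U_0..U_{n-1}
   has a finite open refinement V_0..V_{m-1} of order <= 1, i.e. no point
   lies in three members with distinct indices. *)
Definition covering_dim_le1 (X : MetricSpace) : Prop :=
  forall (n : nat) (U : nat -> X -> Prop),
    (forall i, (i < n)%nat -> is_open (U i)) ->
    (forall x, exists i, (i < n)%nat /\ U i x) ->
    exists (m : nat) (V : nat -> X -> Prop),
      (forall j, (j < m)%nat -> is_open (V j)) /\
      (forall x, exists j, (j < m)%nat /\ V j x) /\
      (forall j, (j < m)%nat -> exists i, (i < n)%nat /\ forall x, V j x -> U i x) /\
      (forall x i j k, (i < m)%nat -> (j < m)%nat -> (k < m)%nat ->
         i <> j -> j <> k -> i <> k -> V i x -> V j x -> V k x -> False).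

Section Sub.
Variable X : MetricSpace.
Variable J : X -> Prop.
Definition sub_dist (a b : {x : X | J x}) : R := dist (proj1_sig a) (proj1_sig b).
Lemma sub_dist_self a : sub_dist a a = 0.
Proof. apply dist_self. Qed.
Lemma sub_dist_eq a b : sub_dist a b = 0 -> a = b.
Proof.
  destruct a as [a Ha], b as [b Hb]; unfold sub_dist; simpl; intro H.
  apply dist_eq in H; subst b.
  now rewrite (Classical_Prop.proof_irrelevance _ Ha Hb).
Qed.
Lemma sub_dist_sym a b : sub_dist a b = sub_dist b a.
Proof. apply dist_sym. Qed.
Lemma sub_dist_tri a b c : sub_dist a c <= sub_dist a b + sub_dist b c.
Proof. apply dist_tri. Qed.
Definition subspace : MetricSpace :=
  MkMetricSpace {x : X | J x} sub_dist sub_dist_self sub_dist_eq sub_dist_sym sub_dist_tri.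
End Sub.

Definition continuous_fun {X : MetricSpace} (f : X -> Cx) : Prop :=
  forall x eps, 0 < eps -> exists d, 0 < d /\
    forall y, dist x y < d -> Cmod (Cadd (f y) (Copp (f x))) < eps.

Definition uniform_algebra {X : MetricSpace} (B : (X -> Cx) -> Prop) : Prop :=
  (forall f, B f -> continuous_fun f) /\
  (forall c : Cx, B (fun _ => c)) /\
  (forall f g, B f -> B g -> B (fun x => Cadd (f x) (g x))) /\
  (forall f g, B f -> B g -> B (fun x => Cmul (f x) (g x))) /\
  (forall x y : X, x <> y -> exists f, B f /\ f x <> f y) /\
  (forall f, continuous_fun f ->
     (forall eps, 0 < eps -> exists g, B g /\ forall x, Cmod (Cadd (f x) (Copp (g x))) <= eps) ->
     B f).

Definition invertible_in {X : Type} (B : (X -> Cx) -> Prop) (g : X -> Cx) : Prop :=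
  B g /\ exists h, B h /\ forall x, Cmul (g x) (h x) = Cone.

Definition dense_invertibles {X : Type} (B : (X -> Cx) -> Prop) : Prop :=
  forall f, B f -> forall eps, 0 < eps ->
    exists g, invertible_in B g /\ forall x, Cmod (Cadd (f x) (Copp (g x))) < eps.

(* Approximate f|J by an invertible g of B and extend g - f|J (Tietze) to a small continuous e
   on K; then F = f + e is close to f, equals g on J, and |F| is bounded below on J.
   On a compact space of dimension at most 1 every continuous function is uniformly close to a
   nonvanishing one: on an order-one cover of small oscillation pick pairwise linearly
   independent values near F and average them with a subordinate partition of unity; at each
   point at most two of these values are mixed with nonnegative weights, so the average is
   nonzero.  Blending this approximation into F only where |F| is small gives a nonvanishing
   Phi that equals g on J, hence is invertible in A, and is close to f. *)

From Stdlib Require Import Reals Lra Lia List ClassicalEpsilon FunctionalExtensionality.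
From Coquelicot Require Complex Hierarchy Series.
Open Scope R_scope.

Local Notation Cdist z w := (Cmod (Cadd z (Copp w))).

Definition Cscale (r : R) (z : Cx) : Cx := (r * fst z, r * snd z).

Ltac Cx_ring :=
  unfold Cadd, Copp, Cmul, Cscale, Cone; apply injective_projections; simpl; ring.

Lemma Cmod_Complex (z : Cx) : Cmod z = Complex.Cmod z.
Proof. unfold Cmod, Complex.Cmod. f_equal. simpl. ring. Qed.

Lemma Cmod_ge0 (z : Cx) : 0 <= Cmod z.
Proof. rewrite Cmod_Complex. apply Complex.Cmod_ge_0. Qed.

Lemma Cmod_triangle (z w : Cx) : Cmod (Cadd z w) <= Cmod z + Cmod w.
Proof. rewrite !Cmod_Complex. apply (Complex.Cmod_triangle z w). Qed.

Lemma Cmod_mul (z w : Cx) : Cmod (Cmul z w) = Cmod z * Cmod w.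
Proof. rewrite !Cmod_Complex. apply (Complex.Cmod_mult z w). Qed.

Lemma Cmod_Cone : Cmod Cone = 1.
Proof. rewrite Cmod_Complex. apply Complex.Cmod_1. Qed.

Lemma Cmod_real (a : R) : Cmod (a, 0) = Rabs a.
Proof. rewrite Cmod_Complex. apply Complex.Cmod_R. Qed.

Lemma Cmod_zero : Cmod (0, 0) = 0.
Proof. rewrite Cmod_real. apply Rabs_R0. Qed.

Lemma Rabs_fst_le_Cmod (z : Cx) : Rabs (fst z) <= Cmod z.
Proof.
  rewrite Cmod_Complex. eapply Rle_trans; [apply Rmax_l|apply Complex.Rmax_Cmod].
Qed.

Lemma Rabs_snd_le_Cmod (z : Cx) : Rabs (snd z) <= Cmod z.
Proof.
  rewrite Cmod_Complex. eapply Rle_trans; [apply Rmax_r|apply Complex.Rmax_Cmod].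
Qed.

Lemma Cmod_le_Rabs_sum (z : Cx) : Cmod z <= Rabs (fst z) + Rabs (snd z).
Proof.
  destruct z as [a b]; simpl.
  replace (a, b) with (Cadd (a, 0) (Cmul (b, 0) (0, 1))) at 1 by Cx_ring.
  eapply Rle_trans; [apply Cmod_triangle|].
  rewrite Cmod_mul, !Cmod_real.
  replace (Cmod (0, 1)) with 1 by (rewrite Cmod_Complex; symmetry; apply Complex.Cmod_Ci).
  lra.
Qed.

Lemma Cmod_Cscale (r : R) (z : Cx) : Cmod (Cscale r z) = Rabs r * Cmod z.
Proof.
  replace (Cscale r z) with (Cmul (r, 0) z) by Cx_ring. now rewrite Cmod_mul, Cmod_real.
Qed.

Lemma Cmod_Copp (z : Cx) : Cmod (Copp z) = Cmod z.
Proof. rewrite !Cmod_Complex. apply Complex.Cmod_opp. Qed.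

Lemma Cdist_sym (z w : Cx) : Cdist z w = Cdist w z.
Proof. rewrite <- Cmod_Copp. f_equal. Cx_ring. Qed.

Lemma Cdist_triangle (z w u : Cx) : Cdist z u <= Cdist z w + Cdist w u.
Proof.
  replace (Cadd z (Copp u)) with (Cadd (Cadd z (Copp w)) (Cadd w (Copp u))) by Cx_ring.
  apply Cmod_triangle.
Qed.

Lemma Cdist_self (z : Cx) : Cdist z z = 0.
Proof. replace (Cadd z (Copp z)) with ((0, 0) : Cx) by Cx_ring. apply Cmod_zero. Qed.

Lemma Cdist_0l (z : Cx) : Cdist (0, 0) z = Cmod z.
Proof. rewrite <- Cmod_Copp. f_equal. Cx_ring. Qed.

Lemma Cnorm2_neq0 (z : Cx) : z <> (0, 0) -> fst z * fst z + snd z * snd z <> 0.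
Proof. intros hz E. apply hz. apply injective_projections; simpl; nra. Qed.

Lemma Rabs_Cmod_sub_le (z w : Cx) : Rabs (Cmod z - Cmod w) <= Cdist z w.
Proof.
  pose proof (Cmod_triangle (Cadd z (Copp w)) w) as Hz.
  pose proof (Cmod_triangle (Cadd w (Copp z)) z) as Hw.
  replace (Cadd (Cadd z (Copp w)) w) with z in Hz by Cx_ring.
  replace (Cadd (Cadd w (Copp z)) z) with w in Hw by Cx_ring.
  rewrite (Cdist_sym w) in Hw. apply Rabs_le. lra.
Qed.

Definition continuous_real {X : MetricSpace} (f : X -> R) : Prop :=
  forall x eps, 0 < eps -> exists d, 0 < d /\
    forall y, dist x y < d -> Rabs (f y - f x) < eps.

Section RealContinuity.
Context {X : MetricSpace}.
Implicit Types f g : X -> R.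

Lemma continuous_real_const (c : R) : continuous_real (fun _ : X => c).
Proof.
  intros x eps heps. exists 1. split; [lra|]. intros y _. rewrite Rminus_diag, Rabs_R0. lra.
Qed.

Lemma continuous_real_dist (a : X) : continuous_real (fun y => dist a y).
Proof.
  intros x eps heps. exists eps. split; [exact heps|]. intros y hy.
  pose proof (dist_tri X a x y). pose proof (dist_tri X a y x).
  rewrite (dist_sym X y x) in *. apply Rabs_def1; lra.
Qed.

Lemma continuous_real_plus f g :
  continuous_real f -> continuous_real g -> continuous_real (fun y => f y + g y).
Proof.
  intros hf hg x eps heps.
  destruct (hf x (eps / 2)) as [d1 [hd1 H1]]; [lra|].
  destruct (hg x (eps / 2)) as [d2 [hd2 H2]]; [lra|].
  exists (Rmin d1 d2). split; [now apply Rmin_pos|]. intros y hy.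
  pose proof (H1 y (Rlt_le_trans _ _ _ hy (Rmin_l _ _))).
  pose proof (H2 y (Rlt_le_trans _ _ _ hy (Rmin_r _ _))).
  replace (f y + g y - (f x + g x)) with ((f y - f x) + (g y - g x)) by ring.
  eapply Rle_lt_trans; [apply Rabs_triang|]. lra.
Qed.

Lemma continuous_real_comp (h : R -> R) f :
  (forall x, continuity_pt h (f x)) -> continuous_real f -> continuous_real (fun y => h (f y)).
Proof.
  intros hh hf x eps heps. destruct (hh x eps heps) as [a [ha Ha]].
  destruct (hf x a ha) as [d [hd Hd]]. exists d. split; [exact hd|]. intros y hy.
  destruct (Req_dec (f y) (f x)) as [E|E].
  - rewrite E, Rminus_diag, Rabs_R0. exact heps.
  - apply (Ha (f y)). split; [split; [exact I|auto]|]. now apply Hd.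
Qed.

Lemma continuous_real_scal (c : R) f :
  continuous_real f -> continuous_real (fun y => c * f y).
Proof.
  apply (continuous_real_comp (fun t => c * t)). intro x.
  apply derivable_continuous_pt, (derivable_pt_scal id c), derivable_pt_id.
Qed.

Lemma continuous_real_sqr f : continuous_real f -> continuous_real (fun y => f y * f y).
Proof.
  apply (continuous_real_comp (fun t => t * t)). intro x.
  apply derivable_continuous_pt, (derivable_pt_mult id id); apply derivable_pt_id.
Qed.

Lemma continuous_real_minus f g :
  continuous_real f -> continuous_real g -> continuous_real (fun y => f y - g y).
Proof.
  intros hf hg. replace (fun y => f y - g y) with (fun y => f y + -1 * g y)
    by (apply functional_extensionality; intro; ring).
  apply continuous_real_plus; [exact hf|]. now apply continuous_real_scal.
Qed.

Lemma continuous_real_mult f g :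
  continuous_real f -> continuous_real g -> continuous_real (fun y => f y * g y).
Proof.
  intros hf hg.
  replace (fun y => f y * g y) with
    (fun y => /4 * ((f y + g y) * (f y + g y)) - /4 * ((f y - g y) * (f y - g y)))
    by (apply functional_extensionality; intro; field).
  apply continuous_real_minus; apply continuous_real_scal, continuous_real_sqr;
    [apply continuous_real_plus | apply continuous_real_minus]; assumption.
Qed.

Lemma continuous_real_inv f :
  (forall y, f y <> 0) -> continuous_real f -> continuous_real (fun y => / f y).
Proof.
  intro hf0. apply (continuous_real_comp Rinv). intro x.
  apply (continuity_pt_inv id); [apply derivable_continuous_pt, derivable_pt_id | apply hf0].
Qed.

Lemma continuous_real_abs f : continuous_real f -> continuous_real (fun y => Rabs (f y)).
Proof.
  intros hf x eps heps. destruct (hf x eps heps) as [d [hd H]]. exists d. split; [exact hd|].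
  intros y hy. eapply Rle_lt_trans; [apply Rabs_triang_inv2|]. now apply H.
Qed.

Lemma continuous_real_max f g :
  continuous_real f -> continuous_real g -> continuous_real (fun y => Rmax (f y) (g y)).
Proof.
  intros hf hg.
  replace (fun y => Rmax (f y) (g y)) with (fun y => /2 * (f y + g y) + /2 * Rabs (f y - g y)).
  - apply continuous_real_plus; apply continuous_real_scal;
      [apply continuous_real_plus | apply continuous_real_abs, continuous_real_minus]; assumption.
  - apply functional_extensionality; intro y. unfold Rmax. destruct (Rle_dec (f y) (g y)).
    + rewrite Rabs_left1 by lra. field.
    + rewrite Rabs_right by lra. field.
Qed.

Lemma continuous_real_min f g :
  continuous_real f -> continuous_real g -> continuous_real (fun y => Rmin (f y) (g y)).
Proof.
  intros hf hg.
  replace (fun y => Rmin (f y) (g y)) with (fun y => /2 * (f y + g y) - /2 * Rabs (f y - g y)).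
  - apply continuous_real_minus; apply continuous_real_scal;
      [apply continuous_real_plus | apply continuous_real_abs, continuous_real_minus]; assumption.
  - apply functional_extensionality; intro y. unfold Rmin. destruct (Rle_dec (f y) (g y)).
    + rewrite Rabs_left1 by lra. field.
    + rewrite Rabs_right by lra. field.
Qed.

Lemma continuous_real_partial_sum (u : nat -> X -> R) (N : nat) :
  (forall k, continuous_real (u k)) -> continuous_real (fun y => sum_f_R0 (fun k => u k y) N).
Proof.
  intro hu. induction N as [|N IH]; [apply hu|]. now apply continuous_real_plus.
Qed.

Lemma continuous_real_uniform_limit f :
  (forall eps, 0 < eps -> exists g, continuous_real g /\ forall y, Rabs (f y - g y) <= eps) ->
  continuous_real f.
Proof.
  intros H x eps heps. destruct (H (eps / 3)) as [g [hg Hg]]; [lra|].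
  destruct (hg x (eps / 3)) as [d [hd Hd]]; [lra|]. exists d. split; [exact hd|]. intros y hy.
  pose proof (Hg x). pose proof (Hg y). pose proof (Hd y hy).
  replace (f y - f x) with ((f y - g y) + (g y - g x) - (f x - g x)) by ring.
  unfold Rminus at 1. eapply Rle_lt_trans; [apply Rabs_triang|]. rewrite Rabs_Ropp.
  eapply Rle_lt_trans; [apply Rplus_le_compat_r, Rabs_triang|]. lra.
Qed.

Lemma continuous_fun_iff (F : X -> Cx) :
  continuous_fun F <-> continuous_real (fun y => fst (F y)) /\ continuous_real (fun y => snd (F y)).
Proof.
  split.
  - intro hF. split; intros x eps heps; destruct (hF x eps heps) as [d [hd H]];
      exists d; split; try exact hd; intros y hy; eapply Rle_lt_trans; try exact (H y hy).
    + apply (Rabs_fst_le_Cmod (Cadd (F y) (Copp (F x)))).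
    + apply (Rabs_snd_le_Cmod (Cadd (F y) (Copp (F x)))).
  - intros [h1 h2] x eps heps.
    destruct (h1 x (eps / 2)) as [d1 [hd1 H1]]; [lra|].
    destruct (h2 x (eps / 2)) as [d2 [hd2 H2]]; [lra|].
    exists (Rmin d1 d2). split; [now apply Rmin_pos|]. intros y hy.
    pose proof (H1 y (Rlt_le_trans _ _ _ hy (Rmin_l _ _))).
    pose proof (H2 y (Rlt_le_trans _ _ _ hy (Rmin_r _ _))).
    eapply Rle_lt_trans; [apply Cmod_le_Rabs_sum|]. simpl. unfold Rminus in *. lra.
Qed.

Lemma continuous_real_Cmod (F : X -> Cx) : continuous_fun F -> continuous_real (fun y => Cmod (F y)).
Proof.
  intros hF x eps heps. destruct (hF x eps heps) as [d [hd H]]. exists d. split; [exact hd|].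
  intros y hy. eapply Rle_lt_trans; [apply Rabs_Cmod_sub_le | now apply H].
Qed.

Lemma continuous_fun_add (F G : X -> Cx) :
  continuous_fun F -> continuous_fun G -> continuous_fun (fun y => Cadd (F y) (G y)).
Proof.
  rewrite !continuous_fun_iff. intros [] []. split; now apply continuous_real_plus.
Qed.

Lemma continuous_fun_sub (F G : X -> Cx) :
  continuous_fun F -> continuous_fun G -> continuous_fun (fun y => Cadd (F y) (Copp (G y))).
Proof.
  rewrite !continuous_fun_iff. intros [] []. split; now apply continuous_real_minus.
Qed.

Lemma continuous_fun_Cscale (a : X -> R) (F : X -> Cx) :
  continuous_real a -> continuous_fun F -> continuous_fun (fun y => Cscale (a y) (F y)).
Proof.
  rewrite !continuous_fun_iff. intros ha []. split; now apply continuous_real_mult.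
Qed.

End RealContinuity.

Lemma continuous_fun_restrict {X : MetricSpace} (J : X -> Prop) (F : X -> Cx) :
  continuous_fun F -> continuous_fun (fun y : subspace X J => F (proj1_sig y)).
Proof.
  intros hF [x hx] eps heps. destruct (hF x eps heps) as [d [hd H]].
  exists d. split; [exact hd|]. intros [y hy]. apply H.
Qed.

(** * Finite sums, weighted averages and compactness *)

Lemma ball_open {X : MetricSpace} (a : X) (r : R) : is_open (fun y => dist a y < r).
Proof.
  intros y hy. exists (r - dist a y). split; [lra|]. intros z hz.
  pose proof (dist_tri X a y z). lra.
Qed.

Definition sumR {T : Type} (l : list T) (u : T -> R) : R :=
  fold_right (fun t acc => u t + acc) 0 l.

Section Sums.
Context {T : Type}.
Implicit Types (l : list T) (u v : T -> R).

Lemma sumR_ge0 l u : (forall t, In t l -> 0 <= u t) -> 0 <= sumR l u.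
Proof.
  induction l as [|a l IH]; intro H; simpl; [lra|].
  pose proof (H a (or_introl eq_refl)). pose proof (IH (fun t ht => H t (or_intror ht))). lra.
Qed.

Lemma sumR_le l u v : (forall t, In t l -> u t <= v t) -> sumR l u <= sumR l v.
Proof.
  induction l as [|a l IH]; intro H; simpl; [lra|].
  pose proof (H a (or_introl eq_refl)). pose proof (IH (fun t ht => H t (or_intror ht))). lra.
Qed.

Lemma le_sumR l u t : (forall t, In t l -> 0 <= u t) -> In t l -> u t <= sumR l u.
Proof.
  induction l as [|a l IH]; intros H ht; [destruct ht|]. simpl.
  pose proof (H a (or_introl eq_refl)).
  pose proof (sumR_ge0 l u (fun t ht => H t (or_intror ht))).
  destruct ht as [<-|ht]; [lra|].
  pose proof (IH (fun t ht => H t (or_intror ht)) ht). lra.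
Qed.

Lemma sumR_pos l u :
  (forall t, In t l -> 0 <= u t) -> (exists t, In t l /\ 0 < u t) -> 0 < sumR l u.
Proof.
  intros H [t [ht hpos]]. pose proof (le_sumR l u t H ht). lra.
Qed.

Lemma sumR_ext l u v : (forall t, In t l -> u t = v t) -> sumR l u = sumR l v.
Proof.
  induction l as [|a l IH]; intro H; simpl; [reflexivity|].
  rewrite (H a (or_introl eq_refl)), IH; [reflexivity|]. intros t ht. apply H. now right.
Qed.

Lemma sumR_scal l u c : sumR l (fun t => c * u t) = c * sumR l u.
Proof. induction l as [|a l IH]; simpl; [ring|]. rewrite IH. ring. Qed.

Lemma sumR_plus l u v : sumR l (fun t => u t + v t) = sumR l u + sumR l v.
Proof. induction l as [|a l IH]; simpl; [ring|]. rewrite IH. ring. Qed.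

Lemma sumR_pos_inv l u : 0 < sumR l u -> exists t, In t l /\ 0 < u t.
Proof.
  intro H. apply NNPP. intro hn.
  assert (Hle : sumR l u <= sumR l (fun _ => 0)).
  { apply sumR_le. intros t ht. apply Rnot_lt_le. intro hpos. apply hn. now exists t. }
  assert (Hzero : forall l', sumR l' (fun _ : T => 0) = 0) by (induction l'; simpl; lra).
  rewrite Hzero in Hle. lra.
Qed.

Lemma continuous_real_sumR {X : MetricSpace} l (u : T -> X -> R) :
  (forall t, continuous_real (u t)) -> continuous_real (fun y => sumR l (fun t => u t y)).
Proof.
  intro hu. induction l as [|a l IH]; simpl;
    [apply continuous_real_const | now apply continuous_real_plus].
Qed.

Definition Csum l (c : T -> Cx) : Cx := (sumR l (fun t => fst (c t)), sumR l (fun t => snd (c t))).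

Lemma Cmod_Csum_le l (c : T -> Cx) : Cmod (Csum l c) <= sumR l (fun t => Cmod (c t)).
Proof.
  induction l as [|a l IH].
  - change (Csum nil c) with ((0, 0) : Cx). rewrite Cmod_zero. simpl. lra.
  - change (Csum (a :: l) c) with (Cadd (c a) (Csum l c)). simpl.
    pose proof (Cmod_triangle (c a) (Csum l c)). lra.
Qed.

(* The extra mass [tau] pulls the average towards 0 and keeps the denominator positive where
   all weights vanish. *)
Definition wavg l (w : T -> R) (c : T -> Cx) (tau : R) : Cx :=
  Cscale (/ (sumR l w + tau)) (Csum l (fun t => Cscale (w t) (c t))).

Lemma Cdist_wavg_le_bound l w c tau z B :
  (forall t, In t l -> 0 <= w t) -> 0 <= tau -> 0 < sumR l w + tau ->
  (forall t, In t l -> 0 < w t -> Cdist z (c t) <= B) ->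
  Cdist z (wavg l w c tau) <= (sumR l w * B + tau * Cmod z) / (sumR l w + tau).
Proof.
  intros hw htau hS hB. set (S := sumR l w + tau) in *.
  assert (E : Cadd z (Copp (wavg l w c tau)) =
    Cscale (/ S) (Cadd (Csum l (fun t => Cscale (w t) (Cadd z (Copp (c t))))) (Cscale tau z))).
  { unfold wavg, Csum, Cscale, Cadd, Copp, S; simpl.
    rewrite (sumR_ext l (fun t => w t * (fst z + - fst (c t)))
               (fun t => fst z * w t + -1 * (w t * fst (c t)))) by (intros; ring).
    rewrite (sumR_ext l (fun t => w t * (snd z + - snd (c t)))
               (fun t => snd z * w t + -1 * (w t * snd (c t)))) by (intros; ring).
    rewrite !sumR_plus, !sumR_scal.
    apply injective_projections; simpl; field; unfold S in hS; lra. }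
  rewrite E, Cmod_Cscale, Rabs_right by (apply Rle_ge, Rlt_le, Rinv_0_lt_compat, hS).
  unfold Rdiv. rewrite (Rmult_comm (_ + _) (/ S)).
  apply Rmult_le_compat_l; [left; now apply Rinv_0_lt_compat|].
  eapply Rle_trans; [apply Cmod_triangle|]. rewrite Cmod_Cscale, Rabs_right by lra.
  apply Rplus_le_compat_r. eapply Rle_trans; [apply Cmod_Csum_le|].
  rewrite Rmult_comm, <- sumR_scal. apply sumR_le. intros t ht.
  rewrite Cmod_Cscale, Rabs_right by (apply Rle_ge, hw, ht).
  destruct (hw t ht) as [hpos|hzero].
  - rewrite (Rmult_comm B). apply Rmult_le_compat_l; [lra | now apply hB].
  - rewrite <- hzero. lra.
Qed.

Lemma continuous_fun_wavg {X : MetricSpace} l (w : T -> X -> R) c tau :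
  (forall t, continuous_real (w t)) -> (forall y, 0 < sumR l (fun t => w t y) + tau) ->
  continuous_fun (fun y => wavg l (fun t => w t y) c tau).
Proof.
  intros hw hpos. apply continuous_fun_Cscale.
  - apply continuous_real_inv; [intro y; specialize (hpos y); lra|].
    apply continuous_real_plus; [now apply continuous_real_sumR | apply continuous_real_const].
  - apply continuous_fun_iff; simpl; split; apply continuous_real_sumR; intro t;
      apply continuous_real_mult; auto; apply continuous_real_const.
Qed.

End Sums.

Section Compactness.
Context {X : MetricSpace} (J : X -> Prop).
Hypothesis compact_J : compact_set J.

Lemma finite_net (d : R) : 0 < d ->
  exists l : list (subspace X J), forall y, J y -> exists a, In a l /\ dist (proj1_sig a) y < d.
Proof.
  intro hd. apply (compact_J (subspace X J) (fun a y => dist (proj1_sig a) y < d)).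
  - intro a. apply ball_open.
  - intros x hx. exists (exist _ x hx). simpl. now rewrite dist_self.
Qed.

Lemma list_lower_bound {T : Type} (l : list T) (r : T -> R) :
  exists d, 0 < d /\ forall t, In t l -> 0 < r t -> d <= r t.
Proof.
  induction l as [|t l [d [hd H]]].
  - exists 1. split; [lra|]. intros t [].
  - destruct (Rlt_dec 0 (r t)) as [hpos|hpos].
    + exists (Rmin d (r t)). split; [now apply Rmin_pos|].
      intros u [<-|hu] hr; [apply Rmin_r|]. eapply Rle_trans; [apply Rmin_l|]. now apply H.
    + exists d. split; [exact hd|]. intros u [<-|hu] hr; [contradiction|]. now apply H.
Qed.

Lemma uniform_continuity (h : subspace X J -> Cx) : continuous_fun h ->
  forall eps, 0 < eps -> exists d, 0 < d /\
    forall a b : subspace X J, dist a b < d -> Cdist (h b) (h a) < eps.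
Proof.
  intros hh eps heps.
  set (good := fun p : subspace X J * R => 0 < snd p /\
         forall b : subspace X J, dist (fst p) b < snd p -> Cdist (h b) (h (fst p)) < eps / 2).
  destruct (compact_J (subspace X J * R)%type
              (fun p y => good p /\ dist (proj1_sig (fst p)) y < snd p / 2)) as [l Hl].
  - intros p y [hp hy]. destruct (ball_open _ _ y hy) as [r [hr Hr]].
    exists r. split; [exact hr|]. intros z hz. split; [exact hp | now apply Hr].
  - intros x hx. destruct (hh (exist _ x hx) (eps / 2)) as [r [hr Hr]]; [lra|].
    exists (exist _ x hx, r). repeat split; auto. simpl. rewrite dist_self. lra.
  - destruct (list_lower_bound l (fun p => snd p / 2)) as [d [hd Hd]].
    exists d. split; [exact hd|]. intros [a ha] b hab.
    destruct (Hl a ha) as [p [hpl [[hp1 hp2] hpa]]].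
    pose proof (Hd p hpl ltac:(lra)).
    assert (Ha : Cdist (h (exist _ a ha)) (h (fst p)) < eps / 2)
      by (apply hp2; change (dist (proj1_sig (fst p)) a < snd p); lra).
    assert (Hb : Cdist (h b) (h (fst p)) < eps / 2).
    { apply hp2. change (dist a (proj1_sig b) < d) in hab.
      change (dist (proj1_sig (fst p)) (proj1_sig b) < snd p).
      pose proof (dist_tri X (proj1_sig (fst p)) a (proj1_sig b)). lra. }
    rewrite Cdist_sym in Ha. pose proof (Cdist_triangle (h b) (h (fst p)) (h (exist _ a ha))). lra.
Qed.

Lemma continuous_bounded (h : subspace X J -> Cx) :
  continuous_fun h -> exists L, forall y, Cmod (h y) <= L.
Proof.
  intro hh. destruct (uniform_continuity h hh 1) as [d [hd Hd]]; [lra|].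
  destruct (finite_net d hd) as [l Hl].
  exists (sumR l (fun a => Cmod (h a) + 1)). intro y.
  destruct (Hl (proj1_sig y) (proj2_sig y)) as [a [ha Hay]].
  pose proof (Hd a y Hay).
  pose proof (Cmod_triangle (Cadd (h y) (Copp (h a))) (h a)).
  replace (Cadd (Cadd (h y) (Copp (h a))) (h a)) with (h y) in * by Cx_ring.
  pose proof (le_sumR l (fun a => Cmod (h a) + 1) a
                ltac:(intros t _; pose proof (Cmod_ge0 (h t)); lra) ha).
  simpl in *. lra.
Qed.

End Compactness.

(** * Tietze extension *)

Module GeometricSeries.
Import Coquelicot.Hierarchy Coquelicot.Series.

Section Dominated.
Variables (q : R) (a : nat -> R) (c : R).
Hypothesis q_range : 0 <= q < 1.

Lemma is_series_geom_scal : is_series (fun n => c * q ^ n) (c / (1 - q)).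
Proof.
  apply (is_series_scal_l c (fun n => q ^ n)), is_series_geom. rewrite Rabs_right; lra.
Qed.

Hypothesis dominated : forall n, Rabs (a n) <= c * q ^ n.

Lemma ex_series_dominated : ex_series a.
Proof.
  apply ex_series_Rabs, (ex_series_le (fun n => Rabs (a n)) (fun n => c * q ^ n)).
  - intro n. unfold norm; simpl. rewrite Rabs_Rabsolu. apply dominated.
  - eexists. apply is_series_geom_scal.
Qed.

Lemma Rabs_Series_dominated : Rabs (Series a) <= c / (1 - q).
Proof.
  eapply Rle_trans; [apply Series_Rabs|].
  - apply (ex_series_le (fun n => Rabs (a n)) (fun n => c * q ^ n)).
    + intro n. unfold norm; simpl. rewrite !Rabs_Rabsolu. apply dominated.
    + eexists. apply is_series_geom_scal.
  - rewrite <- (is_series_unique _ _ is_series_geom_scal). apply Series_le.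
    + intro n. split; [apply Rabs_pos | apply dominated].
    + eexists. apply is_series_geom_scal.
Qed.

End Dominated.

Lemma Rabs_Series_minus_sum_le (q : R) (a : nat -> R) (c : R) (N : nat) :
  0 <= q < 1 -> (forall n, Rabs (a n) <= c * q ^ n) ->
  Rabs (Series a - sum_f_R0 a N) <= c * q ^ S N / (1 - q).
Proof.
  intros hq ha. rewrite (Series_incr_n a (S N)); [| lia | now apply (ex_series_dominated q _ c)].
  simpl pred. replace (_ + _ - _) with (Series (fun k => a (S N + k)%nat)) by ring.
  apply Rabs_Series_dominated; [exact hq|]. intro n. rewrite ha, pow_add. lra.
Qed.

Lemma Series_eq_of_partial_sums (q : R) (a : nat -> R) (c l : R) :
  0 <= q < 1 -> (forall N, Rabs (l - sum_f_R0 a N) <= c * q ^ S N) -> Series a = l.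
Proof.
  intros hq H. apply is_series_unique, is_series_Reals. intros eps heps.
  destruct (pow_lt_1_zero q ltac:(rewrite Rabs_right; lra) (eps / (Rabs c + 1)))
    as [N HN]; [apply Rdiv_lt_0_compat; [lra | pose proof (Rabs_pos c); lra]|].
  exists N. intros n hn. unfold R_dist. rewrite Rabs_minus_sym.
  eapply Rle_lt_trans; [apply H|].
  specialize (HN (S n) ltac:(lia)). rewrite Rabs_right in HN by (apply Rle_ge, pow_le; lra).
  pose proof (Rle_abs c). pose proof (pow_le q (S n) (proj1 hq)).
  apply Rle_lt_trans with ((Rabs c + 1) * q ^ S n); [nra|].
  apply (Rmult_lt_compat_l (Rabs c + 1)) in HN; [|pose proof (Rabs_pos c); lra].
  replace ((Rabs c + 1) * (eps / (Rabs c + 1))) with eps in HN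
    by (field; pose proof (Rabs_pos c); lra). exact HN.
Qed.

End GeometricSeries.
Import GeometricSeries.

Lemma continuous_real_Series {X : MetricSpace} (q c : R) (u : nat -> X -> R) :
  0 <= q < 1 -> (forall n, continuous_real (u n)) -> (forall n y, Rabs (u n y) <= c * q ^ n) ->
  continuous_real (fun y => Coquelicot.Series.Series (fun n => u n y)).
Proof.
  intros hq hu hdom. apply continuous_real_uniform_limit. intros eps heps.
  destruct (pow_lt_1_zero q ltac:(rewrite Rabs_right; lra) (eps * (1 - q) / (Rabs c + 1)))
    as [N HN]; [apply Rdiv_lt_0_compat; [nra | pose proof (Rabs_pos c); lra]|].
  exists (fun y => sum_f_R0 (fun k => u k y) N). split.
  - now apply (continuous_real_partial_sum u).
  - intro y. eapply Rle_trans; [apply (Rabs_Series_minus_sum_le q _ c N hq (fun n => hdom n y))|].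
    specialize (HN (S N) ltac:(lia)). rewrite Rabs_right in HN by (apply Rle_ge, pow_le; lra).
    pose proof (Rle_abs c). pose proof (Rabs_pos c). pose proof (pow_le q (S N) (proj1 hq)).
    apply (Rmult_le_reg_r (1 - q)); [lra|]. unfold Rdiv. rewrite Rmult_assoc, Rinv_l, Rmult_1_r by lra.
    apply Rle_trans with ((Rabs c + 1) * q ^ S N); [nra|].
    apply (Rmult_lt_compat_l (Rabs c + 1)) in HN; [|lra].
    replace ((Rabs c + 1) * (eps * (1 - q) / (Rabs c + 1))) with (eps * (1 - q)) in HN by (field; lra).
    lra.
Qed.

Section TietzeExtension.
Context {X : MetricSpace} (J : X -> Prop).
Hypothesis compact_J : compact_set J.

Definition approx_extension_spec (h : subspace X J -> Cx) (M : R) (e : X -> Cx) : Prop :=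
  continuous_fun e /\ (forall x, Cmod (e x) <= M) /\
  forall y : subspace X J, Cdist (h y) (e (proj1_sig y)) <= 3 / 4 * M.

(* Average the values of h at a finite net, with weights given by tent functions of radius d/2;
   the extra mass d/16 keeps the denominator positive far from J. *)
Lemma approx_extension (h : subspace X J -> Cx) (M : R) :
  continuous_fun h -> 0 < M -> (forall y, Cmod (h y) <= M) ->
  exists e, approx_extension_spec h M e.
Proof.
  intros hh hM hbound.
  destruct (uniform_continuity J compact_J h hh (M / 2)) as [d [hd Hd]]; [lra|].
  destruct (finite_net J compact_J (d / 4)) as [l Hl]; [lra|].
  set (w := fun (a : subspace X J) (x : X) => Rmax 0 (d / 2 - dist (proj1_sig a) x)).
  set (tau := d / 16).
  assert (hw0 : forall a x, 0 <= w a x) by (intros; apply Rmax_l).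
  assert (hS0 : forall x, 0 <= sumR l (fun a => w a x)) by (intros; apply sumR_ge0; auto).
  assert (hden : forall x, 0 < sumR l (fun a => w a x) + tau)
    by (intro x; pose proof (hS0 x); unfold tau; lra).
  exists (fun x => wavg l (fun a => w a x) h tau). split; [|split].
  - apply continuous_fun_wavg; [|exact hden]. intro a.
    apply continuous_real_max; [apply continuous_real_const|].
    apply continuous_real_minus; [apply continuous_real_const | apply continuous_real_dist].
  - intro x. rewrite <- Cdist_0l.
    eapply Rle_trans.
    { apply (Cdist_wavg_le_bound l _ h tau (0, 0) M); auto; [unfold tau; lra|].
      intros a _ _. rewrite Cdist_0l. apply hbound. }
    rewrite Cmod_zero, Rmult_0_r, Rplus_0_r.
    apply (Rmult_le_reg_r (sumR l (fun a => w a x) + tau)); [apply hden|].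
    unfold Rdiv. rewrite Rmult_assoc, Rinv_l by (pose proof (hden x); lra).
    pose proof (hS0 x). unfold tau. nra.
  - intro y.
    assert (HS : d / 4 <= sumR l (fun a => w a (proj1_sig y))).
    { destruct (Hl (proj1_sig y) (proj2_sig y)) as [a [ha Hay]].
      apply Rle_trans with (w a (proj1_sig y)); [|apply (le_sumR l (fun a => w a _)); auto].
      unfold w. eapply Rle_trans; [|apply Rmax_r]. lra. }
    eapply Rle_trans.
    { apply (Cdist_wavg_le_bound l _ h tau _ (M / 2)); auto; [unfold tau; lra|].
      intros a _ hwa. left. apply Hd. unfold w, Rmax in hwa.
      change (dist (proj1_sig a) (proj1_sig y) < d).
      destruct (Rle_dec 0 (d / 2 - dist (proj1_sig a) (proj1_sig y))); lra. }
    pose proof (hbound y). pose proof (hden (proj1_sig y)).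
    apply (Rmult_le_reg_r (sumR l (fun a => w a (proj1_sig y)) + tau)); [lra|].
    unfold Rdiv. rewrite Rmult_assoc, Rinv_l by lra.
    unfold tau in *. nra.
Qed.

Lemma approx_extension_fun : exists ext : (subspace X J -> Cx) -> R -> X -> Cx,
  forall h M, continuous_fun h -> 0 < M -> (forall y, Cmod (h y) <= M) ->
    approx_extension_spec h M (ext h M).
Proof.
  destruct (choice (fun (p : (subspace X J -> Cx) * R) e =>
    continuous_fun (fst p) -> 0 < snd p -> (forall y, Cmod (fst p y) <= snd p) ->
    approx_extension_spec (fst p) (snd p) e)) as [ext Hext].
  - intros [h M]. simpl.
    destruct (classic (continuous_fun h /\ 0 < M /\ forall y, Cmod (h y) <= M))
      as [[hh [hM hb]]|hn].
    + destruct (approx_extension h M hh hM hb) as [e He]. now exists e.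
    + exists (fun _ => (0, 0)). intros hh hM hb. exfalso. now apply hn.
  - exists (fun h M => ext (h, M)). intros h M. apply (Hext (h, M)).
Qed.

(* Repeatedly extend approximately the part of h not yet extended: the remainders shrink like
   (3/4)^n, so the layers sum to an extension. *)
Section Iteration.
Variable ext : (subspace X J -> Cx) -> R -> X -> Cx.
Hypothesis ext_spec : forall h M, continuous_fun h -> 0 < M -> (forall y, Cmod (h y) <= M) ->
  approx_extension_spec h M (ext h M).
Variables (h : subspace X J -> Cx) (M : R).
Hypotheses (continuous_h : continuous_fun h) (M_pos : 0 < M) (h_bound : forall y, Cmod (h y) <= M).

Fixpoint remainder (n : nat) : subspace X J -> Cx :=
  match n with
  | O => h
  | S k => fun y => Cadd (remainder k y) (Copp (ext (remainder k) (M * (3 / 4) ^ k) (proj1_sig y)))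
  end.

Definition layer (n : nat) : X -> Cx := ext (remainder n) (M * (3 / 4) ^ n).

Lemma remainder_spec n :
  continuous_fun (remainder n) /\ forall y, Cmod (remainder n y) <= M * (3 / 4) ^ n.
Proof.
  induction n as [|n [IHc IHb]].
  - simpl. split; [exact continuous_h|]. intro y. rewrite Rmult_1_r. apply h_bound.
  - assert (hp : 0 < M * (3 / 4) ^ n) by (apply Rmult_lt_0_compat; [lra | apply pow_lt; lra]).
    destruct (ext_spec _ _ IHc hp IHb) as [hc [_ hclose]]. split.
    + apply continuous_fun_sub; [exact IHc | now apply continuous_fun_restrict].
    + intro y. eapply Rle_trans; [apply hclose|]. simpl. lra.
Qed.

Lemma layer_spec n : continuous_fun (layer n) /\ forall x, Cmod (layer n x) <= M * (3 / 4) ^ n.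
Proof.
  destruct (remainder_spec n) as [hc hb].
  assert (hp : 0 < M * (3 / 4) ^ n) by (apply Rmult_lt_0_compat; [lra | apply pow_lt; lra]).
  destruct (ext_spec _ _ hc hp hb) as [he [hebound _]]. now split.
Qed.

Lemma telescope (p : Cx -> R) (y : subspace X J) (N : nat) :
  (forall z w, p (Cadd z w) = p z + p w) -> (forall z, p (Copp z) = - p z) ->
  p (h y) = sum_f_R0 (fun k => p (layer k (proj1_sig y))) N + p (remainder (S N) y).
Proof.
  intros hadd hopp. induction N as [|N IH].
  - cbn [sum_f_R0 remainder]. rewrite hadd, hopp. unfold layer. cbn [remainder]. ring.
  - rewrite IH. cbn [sum_f_R0].
    change (remainder (S (S N)) y) with (Cadd (remainder (S N) y) (Copp (layer (S N) (proj1_sig y)))).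
    rewrite hadd, hopp. ring.
Qed.

Definition layers_sum (x : X) : Cx :=
  (Coquelicot.Series.Series (fun n => fst (layer n x)),
   Coquelicot.Series.Series (fun n => snd (layer n x))).

Lemma layers_sum_continuous : continuous_fun layers_sum.
Proof.
  assert (hlayer : forall n, continuous_real (fun x => fst (layer n x)) /\
                             continuous_real (fun x => snd (layer n x)))
    by (intro n; apply continuous_fun_iff, layer_spec).
  apply continuous_fun_iff; simpl; split; apply (continuous_real_Series (3 / 4) M);
    try lra; try apply hlayer; intros n x; eapply Rle_trans.
  - apply Rabs_fst_le_Cmod.
  - apply layer_spec.
  - apply Rabs_snd_le_Cmod.
  - apply layer_spec.
Qed.

Lemma layers_sum_bound x : Cmod (layers_sum x) <= 8 * M.
Proof.
  eapply Rle_trans; [apply Cmod_le_Rabs_sum|]. simpl.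
  assert (H : forall p : Cx -> R, (forall z, Rabs (p z) <= Cmod z) ->
            Rabs (Coquelicot.Series.Series (fun n => p (layer n x))) <= 4 * M).
  { intros p hp. replace (4 * M) with (M / (1 - 3 / 4)) by field.
    apply Rabs_Series_dominated; [lra|]. intro n.
    eapply Rle_trans; [apply hp | apply layer_spec]. }
  pose proof (H fst Rabs_fst_le_Cmod). pose proof (H snd Rabs_snd_le_Cmod). lra.
Qed.

Lemma layers_sum_extends (y : subspace X J) : layers_sum (proj1_sig y) = h y.
Proof.
  assert (H : forall p : Cx -> R, (forall z w, p (Cadd z w) = p z + p w) ->
            (forall z, p (Copp z) = - p z) -> (forall z, Rabs (p z) <= Cmod z) ->
            Coquelicot.Series.Series (fun n => p (layer n (proj1_sig y))) = p (h y)).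
  { intros p hadd hopp hp. apply (Series_eq_of_partial_sums (3 / 4) _ M); [lra|]. intro N.
    rewrite (telescope p y N hadd hopp). replace (_ + _ - _) with (p (remainder (S N) y)) by ring.
    eapply Rle_trans; [apply hp | apply remainder_spec]. }
  apply injective_projections; simpl; apply H; try reflexivity;
    [apply Rabs_fst_le_Cmod | apply Rabs_snd_le_Cmod].
Qed.

End Iteration.

Theorem tietze_extension (h : subspace X J -> Cx) (M : R) :
  continuous_fun h -> 0 < M -> (forall y, Cmod (h y) <= M) ->
  exists e : X -> Cx, continuous_fun e /\ (forall x, Cmod (e x) <= 8 * M) /\
    forall y : subspace X J, e (proj1_sig y) = h y.
Proof.
  intros hh hM hbound. destruct approx_extension_fun as [ext Hext].
  exists (layers_sum ext h M). split; [|split].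
  - now apply layers_sum_continuous.
  - now apply layers_sum_bound.
  - now apply layers_sum_extends.
Qed.

End TietzeExtension.

(** * Nonvanishing approximation in dimension at most one *)

Definition cross (z w : Cx) : R := fst z * snd w - snd z * fst w.

Lemma cross_antisym (z w : Cx) : cross z w = - cross w z.
Proof. unfold cross. ring. Qed.

Lemma cross_nonzero_near (z c : Cx) : cross z c <> 0 ->
  exists rho, 0 < rho /\ forall u, Cdist u z < rho -> cross u c <> 0.
Proof.
  intro hz. set (s := Rabs (fst c) + Rabs (snd c)).
  assert (hs : 0 <= s) by (unfold s; pose proof (Rabs_pos (fst c)); pose proof (Rabs_pos (snd c)); lra).
  pose proof (Rabs_pos_lt _ hz) as hk.
  exists (Rabs (cross z c) / (s + 1)). split; [apply Rdiv_lt_0_compat; lra|]. intros u hu E.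
  assert (Hbound : Rabs (cross u c - cross z c) <= Cdist u z * s).
  { replace (cross u c - cross z c) with (cross (Cadd u (Copp z)) c)
      by (unfold cross, Cadd, Copp; simpl; ring).
    unfold cross, s. pose proof (Rabs_fst_le_Cmod (Cadd u (Copp z))).
    pose proof (Rabs_snd_le_Cmod (Cadd u (Copp z))).
    unfold Rminus. eapply Rle_trans; [apply Rabs_triang|]. rewrite Rabs_Ropp, !Rabs_mult.
    pose proof (Rabs_pos (fst c)). pose proof (Rabs_pos (snd c)). nra. }
  rewrite E, Rminus_0_l, Rabs_Ropp in Hbound.
  apply (Rmult_lt_compat_r (s + 1)) in hu; [|lra].
  unfold Rdiv in hu. rewrite Rmult_assoc, Rinv_l, Rmult_1_r in hu by lra.
  pose proof (Cmod_ge0 (Cadd u (Copp z))). nra.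
Qed.

(* Moving z orthogonally to the line through 0 and c changes cross z c by -t |c|^2. *)
Lemma exists_near_off_line (z c : Cx) (rho : R) : c <> (0, 0) -> 0 < rho ->
  exists z', Cdist z' z < rho /\ cross z' c <> 0.
Proof.
  intros hc hrho. destruct (Req_dec (cross z c) 0) as [hz|hz].
  - pose proof (Cmod_ge0 c).
    set (t := rho / (2 * (Cmod c + 1))).
    assert (ht : 0 < t) by (unfold t; apply Rdiv_lt_0_compat; lra).
    exists (Cadd z (Cscale t (- snd c, fst c))). split.
    + replace (Cadd (Cadd z (Cscale t (- snd c, fst c))) (Copp z)) with (Cmul (t, 0) (Cmul (0, 1) c))
        by Cx_ring.
      rewrite !Cmod_mul, Cmod_real, Rabs_right by lra.
      replace (Cmod (0, 1)) with 1 by (rewrite Cmod_Complex; symmetry; apply Complex.Cmod_Ci).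
      apply Rle_lt_trans with (t * (Cmod c + 1)); [nra|].
      unfold t. field_simplify; lra.
    + unfold cross in hz |- *. simpl. intro E.
      assert (Hc : fst c * fst c + snd c * snd c = 0) by nra.
      apply hc. apply injective_projections; simpl; nra.
  - exists z. rewrite Cdist_self. auto.
Qed.

Lemma exists_near_off_lines (L : list Cx) (w : Cx) (r : R) :
  0 < r -> (forall c, In c L -> c <> (0, 0)) ->
  exists z, Cdist z w < r /\ forall c, In c L -> cross z c <> 0.
Proof.
  intros hr hL.
  enough (H : exists z rho, 0 < rho /\ Cdist z w + rho <= r /\
                forall u, Cdist u z < rho -> forall c, In c L -> cross u c <> 0).
  { destruct H as [z [rho [hrho [hzw Hz]]]]. exists z. split; [lra|].
    apply Hz. rewrite Cdist_self. exact hrho. }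
  induction L as [|c L IH].
  - exists w, r. rewrite Cdist_self. repeat split; [exact hr | lra | intros u _ c []].
  - destruct IH as [z [rho [hrho [hzw Hz]]]]; [intros; apply hL; now right|].
    destruct (exists_near_off_line z c (rho / 2)) as [z' [hz'z hz'c]];
      [apply hL; now left | lra |].
    destruct (cross_nonzero_near z' c hz'c) as [rho' [hrho' Hz']].
    exists z', (Rmin (rho / 2) rho'). split; [now apply Rmin_pos; lra|]. split.
    + pose proof (Cdist_triangle z' z w). pose proof (Rmin_l (rho / 2) rho'). lra.
    + intros u hu c0 [<-|hc0].
      * apply Hz'. eapply Rlt_le_trans; [exact hu | apply Rmin_r].
      * apply Hz; [|exact hc0]. pose proof (Cdist_triangle u z' z). pose proof (Rmin_l (rho / 2) rho').
        lra.
Qed.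

Lemma pairwise_independent_choice (m : nat) (P : nat -> Cx -> Prop) :
  (forall j L, (forall c, In c L -> c <> (0, 0)) ->
     exists z, P j z /\ forall c, In c L -> cross z c <> 0) ->
  exists c : nat -> Cx, forall j, (j < m)%nat ->
    P j (c j) /\ c j <> (0, 0) /\ forall i, (i < m)%nat -> i <> j -> cross (c i) (c j) <> 0.
Proof.
  intro HP. induction m as [|m [c Hc]].
  - exists (fun _ => (0, 0)). intros j hj. lia.
  - destruct (HP m ((1, 0) :: map c (seq 0 m))) as [z [Pz Hz]].
    + intros c0 [<-|hc0]; [intro E; injection E; lra|].
      apply in_map_iff in hc0. destruct hc0 as [i [<- hi]]. apply in_seq in hi.
      apply Hc. lia.
    + assert (hz0 : z <> (0, 0)).
      { intro E. apply (Hz (1, 0)); [now left|]. rewrite E. unfold cross. simpl. ring. }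
      assert (hzc : forall i, (i < m)%nat -> cross z (c i) <> 0).
      { intros i hi. apply Hz. right. apply in_map, in_seq. lia. }
      exists (fun j => if Nat.eq_dec j m then z else c j). intros j hj.
      destruct (Nat.eq_dec j m) as [->|hjm].
      * split; [exact Pz|]. split; [exact hz0|]. intros i hi him.
        destruct (Nat.eq_dec i m) as [|_]; [contradiction|].
        rewrite cross_antisym. intro E. apply (hzc i); [lia|lra].
      * destruct (Hc j ltac:(lia)) as [Pc [hc0 hcc]]. split; [exact Pc|]. split; [exact hc0|].
        intros i hi hij. destruct (Nat.eq_dec i m) as [->|him]; [|apply hcc; lia].
        apply hzc. lia.
Qed.

Section PartitionOfUnity.
Context {K : MetricSpace}.
Hypothesis compact_K : compact_space K.

Definition subordinate_ball (m : nat) (V : nat -> K -> Prop) (t : K * R * nat) : Prop :=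
  0 < snd (fst t) /\ (snd t < m)%nat /\ forall y, dist (fst (fst t)) y < snd (fst t) -> V (snd t) y.

Lemma partition_of_unity (m : nat) (V : nat -> K -> Prop) :
  (forall j, (j < m)%nat -> is_open (V j)) -> (forall x, exists j, (j < m)%nat /\ V j x) ->
  exists w : nat -> K -> R,
    (forall j, continuous_real (w j)) /\ (forall j x, 0 <= w j x) /\
    (forall j x, 0 < w j x -> (j < m)%nat /\ V j x) /\
    (forall x, exists j, (j < m)%nat /\ 0 < w j x).
Proof.
  intros hV hcover.
  set (B := {t : K * R * nat | subordinate_ball m V t}).
  set (center := fun b : B => fst (fst (proj1_sig b))).
  set (radius := fun b : B => snd (fst (proj1_sig b))).
  set (label := fun b : B => snd (proj1_sig b)).
  destruct (compact_K B (fun b y => dist (center b) y < radius b)) as [l Hl].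
  - intro b. apply ball_open.
  - intros x _. destruct (hcover x) as [j [hj hx]]. destruct (hV j hj x hx) as [r [hr Hr]].
    exists (exist _ (x, r, j) (conj hr (conj hj Hr))). unfold center, radius; simpl.
    now rewrite dist_self.
  - set (bump := fun (b : B) (y : K) => Rmax 0 (radius b - dist (center b) y)).
    assert (bump_pos : forall b y, 0 < bump b y -> V (label b) y).
    { intros b y hb. destruct (proj2_sig b) as [_ [_ Hb]]. apply Hb.
      unfold bump, Rmax in hb. destruct (Rle_dec 0 (radius b - dist (center b) y));
        unfold radius, center in *; lra. }
    exists (fun j y => sumR l (fun b => if Nat.eq_dec (label b) j then bump b y else 0)).
    split; [|split; [|split]].
    + intro j. apply continuous_real_sumR. intro b. destruct (Nat.eq_dec (label b) j);
        [|apply continuous_real_const].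
      apply continuous_real_max; [apply continuous_real_const|].
      apply continuous_real_minus; [apply continuous_real_const | apply continuous_real_dist].
    + intros j y. apply sumR_ge0. intros b _. destruct (Nat.eq_dec (label b) j); [apply Rmax_l | lra].
    + intros j y hpos. apply sumR_pos_inv in hpos. destruct hpos as [b [_ hb]].
      destruct (Nat.eq_dec (label b) j) as [<-|]; [|lra].
      split; [apply (proj2_sig b) | now apply bump_pos].
    + intro y. destruct (Hl y I) as [b [hbl hby]]. exists (label b). split; [apply (proj2_sig b)|].
      apply sumR_pos.
      * intros b' _. destruct (Nat.eq_dec (label b') (label b)); [apply Rmax_l | lra].
      * exists b. split; [exact hbl|]. destruct (Nat.eq_dec (label b) (label b)) as [_|]; [|easy].
        unfold bump. eapply Rlt_le_trans; [|apply Rmax_r]. lra.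
Qed.

End PartitionOfUnity.

Lemma Csum_neq0_of_functional {T : Type} (l : list T) (w : T -> R) (c : T -> Cx) (alpha beta : R) :
  (forall t, In t l -> 0 <= w t * (alpha * fst (c t) + beta * snd (c t))) ->
  (exists t, In t l /\ 0 < w t * (alpha * fst (c t) + beta * snd (c t))) ->
  Csum l (fun t => Cscale (w t) (c t)) <> (0, 0).
Proof.
  intros Hnonneg Hpos E.
  assert (Hval : alpha * fst (Csum l (fun t => Cscale (w t) (c t))) +
                 beta * snd (Csum l (fun t => Cscale (w t) (c t))) =
                 sumR l (fun t => w t * (alpha * fst (c t) + beta * snd (c t)))).
  { unfold Csum, Cscale; simpl. rewrite <- !sumR_scal, <- sumR_plus.
    apply sumR_ext. intros. ring. }
  rewrite E in Hval. simpl in Hval. pose proof (sumR_pos _ _ Hnonneg Hpos). lra.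
Qed.

Lemma wavg_neq0_two_active (m : nat) (w : nat -> R) (c : nat -> Cx) :
  (forall j, 0 <= w j) -> (forall j, 0 < w j -> (j < m)%nat) ->
  (forall j, (j < m)%nat -> c j <> (0, 0)) ->
  (forall i j, (i < m)%nat -> (j < m)%nat -> i <> j -> cross (c i) (c j) <> 0) ->
  (forall i j k, 0 < w i -> 0 < w j -> 0 < w k -> i <> j -> j <> k -> i <> k -> False) ->
  (exists a, 0 < w a) ->
  wavg (seq 0 m) w c 0 <> (0, 0).
Proof.
  intros hw0 hwm hc0 hcross horder [a ha] E.
  assert (hin : forall j, 0 < w j -> In j (seq 0 m))
    by (intros j hj; apply in_seq; specialize (hwm j hj); lia).
  assert (hS : 0 < sumR (seq 0 m) w + 0) by (rewrite Rplus_0_r; apply sumR_pos; eauto).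
  assert (hN : Csum (seq 0 m) (fun j => Cscale (w j) (c j)) = (0, 0)).
  { replace (Csum _ _) with (Cscale (sumR (seq 0 m) w + 0) (wavg (seq 0 m) w c 0))
      by (unfold wavg, Cscale; apply injective_projections; simpl; field; lra).
    rewrite E. Cx_ring. }
  revert hN. destruct (classic (exists b, 0 < w b /\ b <> a)) as [[b [hb hba]]|hone].
  - (* Test against kappa * cross _ (c a): it vanishes at c a and equals kappa^2 at c b. *)
    set (kappa := cross (c b) (c a)).
    assert (hk : kappa <> 0) by (apply hcross; auto).
    apply (Csum_neq0_of_functional _ w c (kappa * snd (c a)) (- kappa * fst (c a))).
    + intros j _. destruct (hw0 j) as [hj|hj]; [|rewrite <- hj; lra].
      destruct (Nat.eq_dec j a) as [->|hja]; [unfold cross in *; right; ring|].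
      destruct (Nat.eq_dec j b) as [->|hjb]; [|exfalso; apply (horder a b j); auto].
      replace (w b * _) with (w b * (kappa * kappa)) by (unfold kappa, cross; ring).
      apply Rmult_le_pos; [lra | apply Rle_0_sqr].
    + exists b. split; [auto|].
      replace (w b * _) with (w b * (kappa * kappa)) by (unfold kappa, cross; ring).
      apply Rmult_lt_0_compat; [exact hb | now apply Rsqr_pos_lt].
  - assert (hca : 0 < fst (c a) * fst (c a) + snd (c a) * snd (c a)).
    { pose proof (Cnorm2_neq0 _ (hc0 a (hwm a ha))). nra. }
    apply (Csum_neq0_of_functional _ w c (fst (c a)) (snd (c a))).
    + intros j _. destruct (hw0 j) as [hj|hj]; [|rewrite <- hj; lra].
      destruct (Nat.eq_dec j a) as [->|hja]; [apply Rmult_le_pos; lra|].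
      exfalso. apply hone. now exists j.
    + exists a. split; [auto|]. apply Rmult_lt_0_compat; lra.
Qed.

Lemma small_oscillation_cover (K : MetricSpace) (F : K -> Cx) (eps : R) :
  compact_space K -> covering_dim_le1 K -> continuous_fun F -> 0 < eps ->
  exists (m : nat) (V : nat -> K -> Prop),
    (forall j, (j < m)%nat -> is_open (V j)) /\ (forall x, exists j, (j < m)%nat /\ V j x) /\
    (forall x i j k, (i < m)%nat -> (j < m)%nat -> (k < m)%nat ->
       i <> j -> j <> k -> i <> k -> V i x -> V j x -> V k x -> False) /\
    (forall j x y, (j < m)%nat -> V j x -> V j y -> Cdist (F y) (F x) < eps).
Proof.
  intros hK hdim hF heps. set (T := fun _ : K => True).
  destruct (uniform_continuity T hK (fun y => F (proj1_sig y)) (continuous_fun_restrict T F hF)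
              (eps / 2))
    as [d [hd Hd]]; [lra|].
  destruct (finite_net T hK (d / 2)) as [net Hnet]; [lra|].
  set (U := fun i y => exists a, nth_error net i = Some a /\ dist (proj1_sig a) y < d / 2).
  destruct (hdim (length net) U) as [m [V [hVo [hVc [hVU hVord]]]]].
  - intros i _ y [a [ha hy]]. destruct (ball_open _ _ y hy) as [r [hr Hr]].
    exists r. split; [exact hr|]. intros z hz. exists a. split; [exact ha | now apply Hr].
  - intro x. destruct (Hnet x I) as [a [ha hax]]. destruct (In_nth_error net a ha) as [i hi].
    exists i. split; [apply nth_error_Some; now rewrite hi|]. now exists a.
  - exists m, V. repeat split; [exact hVo | exact hVc | exact hVord |].
    intros j x y hj hx hy. destruct (hVU j hj) as [i [_ HU]].
    destruct (HU x hx) as [a [ha hax]]. destruct (HU y hy) as [a' [ha' hay]].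
    rewrite ha in ha'. injection ha' as <-.
    pose proof (Hd a (exist T x I) ltac:(change (dist (proj1_sig a) x < d); lra)) as Hx.
    pose proof (Hd a (exist T y I) ltac:(change (dist (proj1_sig a) y < d); lra)) as Hy.
    simpl in Hx, Hy. rewrite Cdist_sym in Hx.
    pose proof (Cdist_triangle (F y) (F (proj1_sig a)) (F x)). lra.
Qed.

Theorem nonvanishing_approximation (K : MetricSpace) (F : K -> Cx) (eta : R) :
  compact_space K -> covering_dim_le1 K -> continuous_fun F -> 0 < eta ->
  exists G, continuous_fun G /\ (forall x, G x <> (0, 0)) /\ forall x, Cdist (G x) (F x) < eta.
Proof.
  intros hK hdim hF heta.
  destruct (small_oscillation_cover K F (eta / 2) hK hdim hF) as [m [V [hVo [hVc [hVord hVosc]]]]];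
    [lra|].
  destruct (pairwise_independent_choice m
              (fun j z => (j < m)%nat -> forall x, V j x -> Cdist z (F x) < 3 * eta / 4)) as [c Hc].
  { intros j L hL. destruct (classic (exists x0, V j x0)) as [[x0 hx0]|hempty].
    - destruct (exists_near_off_lines L (F x0) (eta / 4)) as [z [hz Hz]]; [lra | exact hL |].
      exists z. split; [|exact Hz]. intros hj x hx.
      pose proof (hVosc j x0 x hj hx0 hx) as Hosc. rewrite Cdist_sym in Hosc.
      pose proof (Cdist_triangle z (F x0) (F x)). lra.
    - destruct (exists_near_off_lines L (0, 0) 1) as [z [_ Hz]]; [lra | exact hL |].
      exists z. split; [|exact Hz]. intros _ x hx. exfalso. apply hempty. now exists x. }
  destruct (partition_of_unity hK m V hVo hVc) as [w [hwc [hw0 [hwV hwpos]]]].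
  assert (hin : forall j y, 0 < w j y -> In j (seq 0 m)).
  { intros j y hj. apply in_seq. destruct (hwV j y hj). lia. }
  assert (hS : forall y, 0 < sumR (seq 0 m) (fun j => w j y) + 0).
  { intro y. rewrite Rplus_0_r. destruct (hwpos y) as [j [_ hj]].
    apply sumR_pos; [intros; apply hw0 | exists j; eauto]. }
  exists (fun y => wavg (seq 0 m) (fun j => w j y) c 0). split; [|split].
  - now apply continuous_fun_wavg.
  - intro y. apply wavg_neq0_two_active.
    + intro j. apply hw0.
    + intros j hj. apply (hwV j y hj).
    + intros j hj. apply (Hc j hj).
    + intros i j hi hj hij. now apply (Hc j hj).
    + intros i j k hi hj hk hij hjk hik.
      apply (hVord y i j k); try apply (hwV _ y); assumption.
    + destruct (hwpos y) as [j [_ hj]]. now exists j.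
  - intro x. rewrite Cdist_sym. eapply Rle_lt_trans.
    { apply (Cdist_wavg_le_bound _ _ c 0 (F x) (3 * eta / 4)); [intros; apply hw0 | lra | apply hS |].
      intros j _ hj. destruct (hwV j x hj) as [hjm hVx]. rewrite Cdist_sym. left.
      now apply (proj1 (Hc j hjm)). }
    specialize (hS x). rewrite Rplus_0_r in *. rewrite Rmult_0_l, Rplus_0_r.
    unfold Rdiv. rewrite Rmult_comm, <- Rmult_assoc, Rinv_l by lra. lra.
Qed.

(** * Invertibility in the extension algebra *)

Definition Cinv (z : Cx) : Cx :=
  Cscale (/ (fst z * fst z + snd z * snd z)) (fst z, - snd z).

Lemma Cmul_Cinv (z : Cx) : z <> (0, 0) -> Cmul z (Cinv z) = Cone.
Proof.
  intro hz. pose proof (Cnorm2_neq0 z hz).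
  unfold Cmul, Cinv, Cscale, Cone. apply injective_projections; simpl; field; exact H.
Qed.

Lemma Cinv_unique (z w : Cx) : Cmul z w = Cone -> w = Cinv z.
Proof.
  intro H. assert (hz : z <> (0, 0)) by (intro E; rewrite E in H; injection H; lra).
  pose proof (Cmul_Cinv z hz) as Hinv.
  transitivity (Cmul (Cmul z (Cinv z)) w); [rewrite Hinv; Cx_ring|].
  transitivity (Cmul (Cinv z) (Cmul z w)); [Cx_ring|].
  rewrite H. Cx_ring.
Qed.

Lemma continuous_fun_Cinv {X : MetricSpace} (F : X -> Cx) :
  continuous_fun F -> (forall x, F x <> (0, 0)) -> continuous_fun (fun x => Cinv (F x)).
Proof.
  intros hF hF0. pose proof hF as [h1 h2]%continuous_fun_iff.
  apply continuous_fun_Cscale.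
  - apply continuous_real_inv; [intro x; now apply Cnorm2_neq0|].
    apply continuous_real_plus; now apply continuous_real_mult.
  - apply continuous_fun_iff; simpl. split; [exact h1|].
    replace (fun x => - snd (F x)) with (fun x => -1 * snd (F x))
      by (apply functional_extensionality; intro; ring).
    now apply continuous_real_scal.
Qed.

Lemma Cmod_lower_bound_of_inverse {X : MetricSpace} (J : X -> Prop) (g k : subspace X J -> Cx) :
  compact_set J -> continuous_fun k -> (forall y, Cmul (g y) (k y) = Cone) ->
  exists delta, 0 < delta /\ forall y, delta <= Cmod (g y).
Proof.
  intros hJ hk hgk. destruct (continuous_bounded J hJ k hk) as [L hL].
  pose proof (Rle_abs L). pose proof (Rabs_pos L).
  exists (/ (Rabs L + 1)). split; [apply Rinv_0_lt_compat; lra|]. intro y.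
  pose proof (Cmod_mul (g y) (k y)) as E. rewrite hgk, Cmod_Cone in E.
  pose proof (hL y). pose proof (Cmod_ge0 (g y)).
  apply (Rmult_le_reg_r (Rabs L + 1)); [lra|]. rewrite Rinv_l by lra. nra.
Qed.

Lemma nonvanishing_approximation_fixing_large (K : MetricSpace) (F : K -> Cx) (eta : R) :
  compact_space K -> covering_dim_le1 K -> continuous_fun F -> 0 < eta ->
  exists Phi, continuous_fun Phi /\ (forall x, Phi x <> (0, 0)) /\
    (forall x, Cdist (Phi x) (F x) < eta) /\ (forall x, 3 * eta <= Cmod (F x) -> Phi x = F x).
Proof.
  intros hK hdim hF heta.
  destruct (nonvanishing_approximation K F eta hK hdim hF heta) as [G [hG [hG0 hGF]]].
  set (psi := fun x => Rmin 1 (Rmax 0 (Cmod (F x) / eta - 2))).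
  assert (hpsi : forall x, 0 <= psi x <= 1).
  { intro x. unfold psi. split; [apply Rmin_glb; [lra | apply Rmax_l] | apply Rmin_l]. }
  set (Phi := fun x => Cadd (F x) (Cscale (1 - psi x) (Cadd (G x) (Copp (F x))))).
  assert (hclose : forall x, Cdist (Phi x) (F x) = (1 - psi x) * Cdist (G x) (F x)).
  { intro x. unfold Phi. replace (Cadd (Cadd _ _) (Copp (F x))) with
      (Cscale (1 - psi x) (Cadd (G x) (Copp (F x)))) by Cx_ring.
    rewrite Cmod_Cscale, Rabs_right; [reflexivity|]. specialize (hpsi x). lra. }
  assert (hnear : forall x, Cdist (Phi x) (F x) <= Cdist (G x) (F x)).
  { intro x. rewrite hclose. pose proof (hpsi x). pose proof (Cmod_ge0 (Cadd (G x) (Copp (F x)))). nra. }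
  assert (hratio : forall x, Cmod (F x) / eta - 2 = (Cmod (F x) - 2 * eta) * / eta)
    by (intro; field; lra).
  exists Phi. split; [|split; [|split]].
  - apply continuous_fun_add; [exact hF|]. apply continuous_fun_Cscale; [|now apply continuous_fun_sub].
    apply continuous_real_minus; [apply continuous_real_const|].
    apply continuous_real_min; [apply continuous_real_const|].
    apply continuous_real_max; [apply continuous_real_const|].
    apply continuous_real_minus; [|apply continuous_real_const].
    unfold Rdiv. apply continuous_real_mult;
      [now apply continuous_real_Cmod | apply continuous_real_const].
  - intros x E. pose proof (Rinv_0_lt_compat eta heta).
    destruct (Rle_lt_dec (Cmod (F x)) (2 * eta)) as [hsmall|hlarge].
    + assert (hpsi0 : psi x = 0).
      { unfold psi. rewrite Rmax_left, Rmin_right; [reflexivity | lra | rewrite (hratio x); nra]. }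
      apply (hG0 x). unfold Phi in E. rewrite hpsi0 in E. rewrite <- E. Cx_ring.
    + pose proof (hnear x) as Hx. pose proof (hGF x). rewrite E, Cdist_0l in Hx. lra.
  - intro x. eapply Rle_lt_trans; [apply hnear | apply hGF].
  - intros x hx. unfold Phi. pose proof (Rinv_0_lt_compat eta heta).
    assert (eta * / eta = 1) by (field; lra).
    replace (psi x) with 1 by (unfold psi; rewrite Rmin_left; [reflexivity|];
      eapply Rle_trans; [|apply Rmax_r]; rewrite (hratio x); nra).
    Cx_ring.
Qed.

Lemma invertible_in_of_nonvanishing {K : MetricSpace} (J : K -> Prop)
  (B : (subspace K J -> Cx) -> Prop) (Phi : K -> Cx) :
  continuous_fun Phi -> (forall x, Phi x <> (0, 0)) ->
  invertible_in B (fun y : subspace K J => Phi (proj1_sig y)) ->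
  invertible_in (fun f : K -> Cx => continuous_fun f /\ B (fun y : subspace K J => f (proj1_sig y))) Phi.
Proof.
  intros hPhi hPhi0 [hB [k [hk hPhik]]]. split; [now split|].
  exists (fun x => Cinv (Phi x)). split; [split|].
  - now apply continuous_fun_Cinv.
  - replace (fun y : subspace K J => Cinv (Phi (proj1_sig y))) with k; [exact hk|].
    apply functional_extensionality. intro y. now apply Cinv_unique.
  - intro x. now apply Cmul_Cinv.
Qed.

Theorem lemma8p1 (K : MetricSpace) (J : K -> Prop)
  (B : (subspace K J -> Cx) -> Prop) :
  compact_space K ->
  covering_dim_le1 K ->
  compact_set J ->
  uniform_algebra B ->
  dense_invertibles B ->
  dense_invertibles
    (fun f : K -> Cx =>
       continuous_fun f /\ B (fun y : subspace K J => f (proj1_sig y))).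
Proof.
  intros hK hdim hJ [B_cont _] hdense f [hf hfB] eps heps.
  destruct (hdense _ hfB (eps / 32)) as [g [[hgB [k [hkB hgk]]] hfg]]; [lra|].
  destruct (tietze_extension J hJ (fun y => Cadd (g y) (Copp (f (proj1_sig y)))) (eps / 32))
    as [e [he [he_bound he_ext]]]; [| lra | intro y; rewrite Cdist_sym; left; apply hfg |].
  { apply continuous_fun_sub; [now apply B_cont | now apply continuous_fun_restrict]. }
  set (F := fun x => Cadd (f x) (e x)).
  assert (hFJ : forall y, F (proj1_sig y) = g y) by (intro y; unfold F; rewrite he_ext; Cx_ring).
  destruct (Cmod_lower_bound_of_inverse J g k hJ (B_cont k hkB) hgk) as [delta [hdelta hg_lower]].
  destruct (nonvanishing_approximation_fixing_large K F (Rmin (delta / 3) (eps / 4)))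
    as [Phi [hPhi [hPhi0 [hPhiF hPhi_fix]]]];
    [exact hK | exact hdim | now apply continuous_fun_add | now apply Rmin_pos; lra |].
  assert (hPhiJ : forall y, Phi (proj1_sig y) = g y).
  { intro y. rewrite hPhi_fix, hFJ; [reflexivity|]. rewrite hFJ.
    pose proof (Rmin_l (delta / 3) (eps / 4)). pose proof (hg_lower y). lra. }
  exists Phi. split.
  - apply invertible_in_of_nonvanishing; [exact hPhi | exact hPhi0|].
    replace (fun y : subspace K J => Phi (proj1_sig y)) with g
      by (apply functional_extensionality; intro y; now rewrite hPhiJ).
    split; [exact hgB|]. now exists k.
  - intro x. pose proof (Cdist_triangle (f x) (F x) (Phi x)) as Htri.
    replace (Cadd (f x) (Copp (F x))) with (Copp (e x)) in Htri by (unfold F; Cx_ring).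
    rewrite Cmod_Copp, (Cdist_sym (F x)) in Htri.
    pose proof (he_bound x). pose proof (hPhiF x). pose proof (Rmin_r (delta / 3) (eps / 4)). lra.
Qed.
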